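(* Let $H$ be a finite-dimensional Hopf algebra over a field $\Bbbk$ and $B$ a right $H$-comodule algebra. Let $\mathcal{E}$ be the class of short exact sequences $0\to M\xrightarrow{f}N\xrightarrow{g}L\to0$ of $B$-modules such that $0\to M\otimes H\xrightarrow{f\otimes\mathrm{Id}_H}N\otimes H\xrightarrow{g\otimes\mathrm{Id}_H}L\otimes H\to0$ is split exact as a sequence of $B$-modules. Then $\mathcal{E}$ (as the class of conflations, with inflations the first maps and deflations the second maps of such sequences) defines an exact structure on the category of $B$-modules in the sense of Quillen.
   Context: $H$ has comultiplication $\Delta(h)=\sum h_1\otimes h_2$, counit $\epsilon$, antipode $S$. A right $H$-comodule algebra is a unital $\Bbbk$-algebra $B$ with a unital algebra map $\Delta_B:B\to B\otimes H$, $\Delta_B(b)=\sum b_1\otimes b_2$, coassociative and counital. For a $B$-module $M$ and $H$-module $U$, $M\otimes U$ is a $B$-module via $b\cdot(x\otimes u)=\sum b_1x\otimes b_2u$; $H$ is the left regular $H$-module. An exact structure on an additive category is a class of kernel-cokernel pairs (conflations) such that the identity of $0$ is a deflation, compositions of deflations (resp. inflations) are deflations (resp. inflations), deflations are stable under pullback and inflations under pushout. *)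

From HB Require Import structures.
From mathcomp Require Import all_boot all_order all_algebra.
From mathcomp Require Import falgebra.
Set Implicit Arguments. Unset Strict Implicit. Unset Printing Implicit Defensive.
Import GRing.Theory.
Local Open Scope ring_scope.

(* Tensor products V (x) H with the finite-dimensional algebra H are encoded
   through the fixed basis hb of H:  a tensor  sum_i v_i (x) hb i  is the
   finite function  i |-> v_i.  *)
Section Tensors.
Variables (k : fieldType) (H : falgType k).

Definition hn : nat := \dim (fullv : {vspace H}).
Definition hb (i : 'I_hn) : H := tnth (vbasis (fullv : {vspace H})) i.
Definition hc (i : 'I_hn) (h : H) : k := coord (vbasis (fullv : {vspace H})) i h.

Definition tens (A : Type) := {ffun 'I_hn -> A}.

(* unit 1 (x) 1 and product (a (x) h)(a' (x) h') = a a' (x) h h' in A (x) H *)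
Definition tone (A : algType k) : tens A := [ffun l => hc l 1 *: (1 : A)].
Definition tmul (A : algType k) (t s : tens A) : tens A :=
  [ffun l => \sum_(i < hn) \sum_(j < hn) hc l (hb i * hb j) *: (t i * s j)].

Definition tmap (A A' : Type) (phi : A -> A') (t : tens A) : tens A' :=
  [ffun i => phi (t i)].

(* (id (x) Delta) : A (x) H -> (A (x) H) (x) H, outer index = last factor *)
Definition idtD (A : lmodType k) (D : H -> tens H) (t : tens A) : tens (tens A) :=
  [ffun l => [ffun j => \sum_(i < hn) hc j (D (hb i) l) *: t i]].

Definition is_hopf (D : H -> tens H) (eps : H -> k) (S : H -> H) : Prop :=
  [/\ (forall (a : k) (x y : H), D (a *: x + y) = a *: D x + D y),
      (forall (a : k) (x y : H), eps (a *: x + y) = a * eps x + eps y),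
      (forall (a : k) (x y : H), S (a *: x + y) = a *: S x + S y),
      (forall h : H, tmap D (D h) = idtD D (D h))
      & [/\ (forall h : H, \sum_(i < hn) eps (D h i) *: hb i = h),
            (forall h : H, \sum_(i < hn) eps (hb i) *: D h i = h),
            D 1 = tone H /\ (forall g h : H, D (g * h) = tmul (D g) (D h)),
            eps 1 = 1 /\ (forall g h : H, eps (g * h) = eps g * eps h)
          &
            (forall h : H, \sum_(i < hn) S (D h i) * hb i = eps h *: 1) /\
            (forall h : H, \sum_(i < hn) D h i * S (hb i) = eps h *: 1)]].

Definition is_comod_alg (D : H -> tens H) (eps : H -> k)
    (B : algType k) (DB : B -> tens B) : Prop :=
  [/\ (forall (a : k) (x y : B), DB (a *: x + y) = a *: DB x + DB y),
      DB 1 = tone B,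
      (forall x y : B, DB (x * y) = tmul (DB x) (DB y)),
      (forall b : B, tmap DB (DB b) = idtD D (DB b))
    & (forall b : B, \sum_(i < hn) eps (hb i) *: DB b i = b)].

Section Modules.
Variables (B : algType k) (DB : B -> tens B).

(* the B-module M (x) H:  b.(x (x) h) = sum b_0 x (x) b_1 h.
   (The k-action on a B-module is through c |-> c%:A.)
   NB: only the additive structure of {ffun _ -> M} is used; the B-action
   on M (x) H is tact, not the pointwise one. *)
Definition tact (M : lmodType B) (b : B) (t : tens M) : tens M :=
  [ffun l => \sum_(i < hn) \sum_(j < hn)
               ((hc l (hb i * hb j))%:A : B) *: (DB b i *: t j)].

Definition Blin (M N : lmodType B) (f : M -> N) : Prop :=
  forall (a : B) (x y : M), f (a *: x + y) = a *: f x + f y.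

Definition tBlin (M N : lmodType B) (F : tens M -> tens N) : Prop :=
  forall (a : B) (t s : tens M), F (tact a t + s) = tact a (F t) + F s.

Definition split_exact_tens (M N L : lmodType B)
    (F : tens M -> tens N) (G : tens N -> tens L) : Prop :=
  [/\ tBlin F, tBlin G, injective F,
      (forall z, exists y, G y = z) /\ (forall y, G y = 0 <-> exists x, y = F x)
    & exists r : tens N -> tens M, tBlin r /\ forall t, r (F t) = t].

Definition E_H (M N L : lmodType B) (f : M -> N) (g : N -> L) : Prop :=
  [/\ Blin f, Blin g, injective f,
      (forall z, exists y, g y = z) /\ (forall y, g y = 0 <-> exists x, y = f x)
    & split_exact_tens (tmap f) (tmap g)].

End Modules.
End Tensors.

Section ExactStructure.
Variables (B : pzRingType).

Definition Bhom (M N : lmodType B) (f : M -> N) : Prop :=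
  forall (a : B) (x y : M), f (a *: x + y) = a *: f x + f y.

Definition mclass := forall M N L : lmodType B, (M -> N) -> (N -> L) -> Prop.

Definition is_kernel (M N L : lmodType B) (f : M -> N) (g : N -> L) : Prop :=
  (forall x, g (f x) = 0) /\
  forall (X : lmodType B) (u : X -> N), Bhom u -> (forall x, g (u x) = 0) ->
    (exists v : X -> M, Bhom v /\ forall x, f (v x) = u x) /\
    (forall v1 v2 : X -> M, Bhom v1 -> Bhom v2 ->
       (forall x, f (v1 x) = u x) -> (forall x, f (v2 x) = u x) -> v1 =1 v2).

Definition is_cokernel (M N L : lmodType B) (f : M -> N) (g : N -> L) : Prop :=
  (forall x, g (f x) = 0) /\
  forall (X : lmodType B) (u : N -> X), Bhom u -> (forall x, u (f x) = 0) ->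
    (exists v : L -> X, Bhom v /\ forall y, v (g y) = u y) /\
    (forall v1 v2 : L -> X, Bhom v1 -> Bhom v2 ->
       (forall y, v1 (g y) = u y) -> (forall y, v2 (g y) = u y) -> v1 =1 v2).

Definition deflation (E : mclass) (N L : lmodType B) (g : N -> L) : Prop :=
  exists (M : lmodType B) (f : M -> N), E M N L f g.
Definition inflation (E : mclass) (M N : lmodType B) (f : M -> N) : Prop :=
  exists (L : lmodType B) (g : N -> L), E M N L f g.

Definition is_pullback (N L L' P : lmodType B) (g : N -> L) (h : L' -> L)
    (p1 : P -> N) (p2 : P -> L') : Prop :=
  [/\ Bhom p1, Bhom p2, (forall x, g (p1 x) = h (p2 x))
    & forall (X : lmodType B) (u1 : X -> N) (u2 : X -> L'), Bhom u1 -> Bhom u2 ->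
      (forall x, g (u1 x) = h (u2 x)) ->
      (exists v : X -> P, [/\ Bhom v, forall x, p1 (v x) = u1 x
                                      & forall x, p2 (v x) = u2 x]) /\
      (forall v1 v2 : X -> P, Bhom v1 -> Bhom v2 ->
         (forall x, p1 (v1 x) = u1 x) -> (forall x, p2 (v1 x) = u2 x) ->
         (forall x, p1 (v2 x) = u1 x) -> (forall x, p2 (v2 x) = u2 x) ->
         v1 =1 v2)].

Definition is_pushout (M N M' Q : lmodType B) (f : M -> N) (h : M -> M')
    (q1 : N -> Q) (q2 : M' -> Q) : Prop :=
  [/\ Bhom q1, Bhom q2, (forall x, q1 (f x) = q2 (h x))
    & forall (X : lmodType B) (u1 : N -> X) (u2 : M' -> X), Bhom u1 -> Bhom u2 ->
      (forall x, u1 (f x) = u2 (h x)) ->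
      (exists v : Q -> X, [/\ Bhom v, forall y, v (q1 y) = u1 y
                                      & forall y, v (q2 y) = u2 y]) /\
      (forall v1 v2 : Q -> X, Bhom v1 -> Bhom v2 ->
         (forall y, v1 (q1 y) = u1 y) -> (forall y, v1 (q2 y) = u2 y) ->
         (forall y, v2 (q1 y) = u1 y) -> (forall y, v2 (q2 y) = u2 y) ->
         v1 =1 v2)].

Definition exact_structure (E : mclass) : Prop :=
  [/\
      (forall (M N L : lmodType B) (f : M -> N) (g : N -> L), E M N L f g ->
         [/\ Bhom f, Bhom g, is_kernel f g & is_cokernel f g]),
      (forall Z : lmodType B, (forall z : Z, z = 0) -> deflation E (@id Z)),
      (forall (N L P : lmodType B) (g1 : N -> L) (g2 : L -> P),
         deflation E g1 -> deflation E g2 -> deflation E (g2 \o g1)) /\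
      (forall (M N P : lmodType B) (f1 : M -> N) (f2 : N -> P),
         inflation E f1 -> inflation E f2 -> inflation E (f2 \o f1)),
      (forall (N L L' : lmodType B) (g : N -> L) (h : L' -> L),
         deflation E g -> Bhom h ->
         (exists (P : lmodType B) (p1 : P -> N) (p2 : P -> L'), is_pullback g h p1 p2) /\
         (forall (P : lmodType B) (p1 : P -> N) (p2 : P -> L'),
            is_pullback g h p1 p2 -> deflation E p2))
    &
      (forall (M N M' : lmodType B) (f : M -> N) (h : M -> M'),
         inflation E f -> Bhom h ->
         (exists (Q : lmodType B) (q1 : N -> Q) (q2 : M' -> Q), is_pushout f h q1 q2) /\
         (forall (Q : lmodType B) (q1 : N -> Q) (q2 : M' -> Q),
            is_pushout f h q1 q2 -> inflation E q2))].

End ExactStructure.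

(* This functor acts componentwise in a basis of H, so
   it is exact; of the comodule algebra structure only Delta_B 1 = 1 (x) 1 is
   needed, to make maps commuting with the B-action on M (x) H additive.  The
   axioms are then inherited from the split exact structure: retractions of
   f (x) H compose; a retraction r of F gives the section (1 - F r) c of G for
   any lift c, and sections of (g2 g1) (x) H give a retraction of the kernel
   inclusion.  Pullbacks and pushouts are a kernel in N (+) L' and a cokernel of
   M -> N (+) M'; on a pushout the retraction is q1 a + q2 b |-> h (r a) + b,
   well defined because the kernel of q1 + q2 is the image of (f, -h). *)

From HB Require Import structures.
From mathcomp Require Import all_boot all_order all_algebra.
From mathcomp Require Import falgebra generic_quotient ring_quotient boolp.
Set Implicit Arguments. Unset Strict Implicit. Unset Printing Implicit Defensive.
Import GRing.Theory.
Local Open Scope ring_scope.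
Local Open Scope quotient_scope.

Section BLinear.
Variables (R : pzRingType) (M N : lmodType R) (f : M -> N) (hf : Bhom f).

Definition Blinear : {linear M -> N} :=
  HB.pack_for {linear M -> N} f (GRing.isLinear.Build R M N *:%R f hf).

Lemma Bhom0 : f 0 = 0. Proof. exact: linear0 Blinear. Qed.
Lemma BhomD x y : f (x + y) = f x + f y. Proof. exact: linearD Blinear x y. Qed.
Lemma BhomZ a x : f (a *: x) = a *: f x. Proof. exact: linearZ_LR Blinear a x. Qed.
Lemma BhomN x : f (- x) = - f x. Proof. exact: linearN Blinear x. Qed.
Lemma BhomB x y : f (x - y) = f x - f y. Proof. exact: linearB Blinear x y. Qed.
Lemma Bhom_sum I r (P : pred I) (F : I -> M) :
  f (\sum_(i <- r | P i) F i) = \sum_(i <- r | P i) f (F i).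
Proof. exact: (@raddf_sum _ _ Blinear I r P F). Qed.

End BLinear.

Lemma Bhom_comp (R : pzRingType) (M N P : lmodType R) (f : M -> N) (g : N -> P) :
  Bhom f -> Bhom g -> Bhom (g \o f).
Proof. by move=> hf hg a x y /=; rewrite hf hg. Qed.

Lemma Bhom_const0 (R : pzRingType) (X Y : lmodType R) : Bhom (fun _ : X => 0 : Y).
Proof. by move=> a x y; rewrite scaler0 addr0. Qed.

Lemma Bhom_orbit (R : pzRingType) (X : lmodType R) (x : X) :
  Bhom (fun b : R^o => (b : R) *: x).
Proof. by move=> a b c; rewrite scalerDl scalerA. Qed.

(* Bundled, so that [submod S] and [quotmod S] below get canonical structures. *)
Record submodule (R : pzRingType) (V : lmodType R) := Submodule {
  submodule_mem :> {pred V};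
  submoduleP : submod_closed submodule_mem }.

HB.instance Definition _ (R : pzRingType) (V : lmodType R) (S : submodule V) :=
  GRing.isSubmodClosed.Build R V (submodule_mem S)
    (GRing.submod_closed_semi (submoduleP S)).

Section SubmoduleType.
Variables (R : pzRingType) (V : lmodType R) (S : submodule V).

Definition submod := {x : V | x \in submodule_mem S}.
HB.instance Definition _ := [isSub of submod for @sval _ _].
HB.instance Definition _ := [Choice of submod by <:].
HB.instance Definition _ := [SubChoice_isSubLmodule of submod by <:].

Lemma val_Bhom : Bhom (val : submod -> V). Proof. by []. Qed.

Lemma insubd_Bhom (X : lmodType R) (u : X -> V) :
  Bhom u -> (forall x, u x \in S) -> Bhom (fun x => insubd (0 : submod) (u x)).
Proof.
by move=> hu uS a x y; apply: val_inj; rewrite /= hu !insubdK ?rpredD ?rpredZ.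
Qed.

End SubmoduleType.

Section QuotientModule.
Variables (R : pzRingType) (V : lmodType R) (S : submodule V).

Definition quotmod :=
  @ring_quotient.Quotient.quot V (GRing.ZmodClosed.clone V (submodule_mem S) _).
Local Notation Q := quotmod.
HB.instance Definition _ := GRing.Zmodule.on Q.
HB.instance Definition _ := Choice.on Q.
HB.instance Definition _ := Quotient.on Q.

Definition qscale (a : R) := lift_op1 Q ( *:%R a).

Lemma pi_scale a : {morph \pi : x / a *: x >-> qscale a x}.
Proof.
move=> x; unlock qscale; apply/eqP; rewrite piE /ring_quotient.Quotient.equiv.
by rewrite -scalerBr rpredZ // ring_quotient.Quotient.idealrBE reprK.
Qed.
Canonical pi_scale_morph a := PiMorph1 (pi_scale a).

Lemma qscaleA a b x : qscale a (qscale b x) = qscale (a * b) x.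
Proof. by rewrite -[x]reprK !piE scalerA. Qed.
Lemma qscale1 : left_id 1 qscale.
Proof. by move=> x; rewrite -[x]reprK !piE scale1r. Qed.
Lemma qscaleDr : right_distributive qscale +%R.
Proof. by move=> a x y; rewrite -[x]reprK -[y]reprK !piE scalerDr. Qed.
Lemma qscaleDl x : {morph qscale^~ x : a b / a + b}.
Proof. by move=> a b; rewrite -[x]reprK !piE scalerDl. Qed.
HB.instance Definition _ :=
  GRing.Zmodule_isLmodule.Build R Q qscaleA qscale1 qscaleDr qscaleDl.

Lemma pi_Bhom : Bhom \pi_Q.
Proof. by move=> a x y; rewrite !piE. Qed.

Lemma pi_eq0 x : \pi_Q x = 0 <-> x \in S.
Proof.
have := ring_quotient.Quotient.idealrBE _ x 0; rewrite subr0 => ->.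
by rewrite -[0 : Q](linear0 (Blinear pi_Bhom)); split => /eqP.
Qed.

Section Lift.
Variables (X : lmodType R) (w : V -> X).
Hypotheses (hw : Bhom w) (wS : forall x, x \in S -> w x = 0).

Definition qlift (z : Q) : X := w (repr z).

Lemma qlift_pi x : qlift (\pi_Q x) = w x.
Proof.
apply/eqP; rewrite -subr_eq0 -(BhomB hw) wS //.
by rewrite ring_quotient.Quotient.idealrBE reprK.
Qed.

Lemma qlift_Bhom : Bhom qlift.
Proof.
by move=> a z z'; rewrite -[z]reprK -[z']reprK -(pi_Bhom a) !qlift_pi hw.
Qed.

End Lift.

Lemma pi_surj z : exists x, \pi_Q x = z.
Proof. by exists (repr z); rewrite reprK. Qed.

End QuotientModule.

Section KernelImage.
Variables (R : pzRingType) (M N : lmodType R).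

Lemma kersub_closed (g : M -> N) : Bhom g -> submod_closed [pred x | g x == 0].
Proof.
move=> hg; split=> [|a x y]; rewrite !inE ?(Bhom0 hg) // hg.
by move=> /eqP-> /eqP->; rewrite scaler0 addr0.
Qed.
Definition kersub (g : M -> N) (hg : Bhom g) := Submodule (kersub_closed hg).

Lemma kersubP (g : M -> N) (hg : Bhom g) x : x \in kersub hg <-> g x = 0.
Proof. by rewrite inE; split => /eqP. Qed.

Lemma imsub_closed (f : M -> N) :
  Bhom f -> submod_closed (fun y => `[< exists x, y = f x >]).
Proof.
move=> hf; split=> [|a _ _ /asboolP[x ->] /asboolP[y ->]]; apply/asboolP.
  by exists 0; rewrite (Bhom0 hf).
by exists (a *: x + y); rewrite hf.
Qed.
Definition imsub (f : M -> N) (hf : Bhom f) := Submodule (imsub_closed hf).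

Lemma imsubP (f : M -> N) (hf : Bhom f) y : y \in imsub hf <-> exists x, y = f x.
Proof. by split => [/asboolP|/asboolP]. Qed.

Lemma pi_imsub_eq0 (f : M -> N) (hf : Bhom f) y :
  \pi_(quotmod (imsub hf)) y = 0 <-> exists x, y = f x.
Proof. exact: iff_trans (pi_eq0 _ _) (imsubP _ _). Qed.

End KernelImage.

Section ShortExact.
Variables (R : pzRingType) (M N L : lmodType R) (f : M -> N) (g : N -> L).
Hypotheses (hf : Bhom f) (hg : Bhom g) (f_inj : injective f)
  (g_surj : forall z, exists y, g y = z)
  (fg_exact : forall y, g y = 0 <-> exists x, y = f x).

Lemma exact_comp0 x : g (f x) = 0. Proof. by apply/fg_exact; exists x. Qed.

Lemma exact_is_kernel : is_kernel f g.
Proof.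
split=> [|X u hu gu0]; first exact: exact_comp0.
have [v fv] : {v : X -> M & forall x, f (v x) = u x}.
  apply: (choice (P := fun x m => f m = u x)) => x.
  by have [m ->] := (fg_exact (u x)).1 (gu0 x); exists m.
split=> [|v1 v2 _ _ f1 f2 x]; last by apply: f_inj; rewrite f1 f2.
by exists v; split=> // a x y; apply: f_inj; rewrite hf !fv hu.
Qed.

Lemma exact_is_cokernel : is_cokernel f g.
Proof.
split=> [|X u hu uf0]; first exact: exact_comp0.
have [s gs] := choice g_surj.
have u_fact y y' : g y = g y' -> u y = u y'.
  move=> e; apply/eqP; rewrite -subr_eq0 -(BhomB hu).
  have /fg_exact[m ->] : g (y - y') = 0 by rewrite (BhomB hg) e subrr.
  by rewrite uf0.
split=> [|v1 v2 _ _ v1g v2g z]; last by have [y <-] := g_surj z; rewrite v1g v2g.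
exists (u \o s); split=> [a z z'|y] /=; last by apply: u_fact; rewrite gs.
by rewrite -hu; apply: u_fact; rewrite hg !gs.
Qed.

End ShortExact.

(* Points of a pullback, and equality between them, are detected by maps out of
   the free module [R^o]. *)
Section Pullback.
Variables (R : pzRingType) (N L L' P : lmodType R) (g : N -> L) (h : L' -> L).
Variables (p1 : P -> N) (p2 : P -> L').
Hypotheses (hg : Bhom g) (hh : Bhom h) (pb : is_pullback g h p1 p2).

Lemma pullback_point n l' : g n = h l' -> exists x, p1 x = n /\ p2 x = l'.
Proof.
case: pb => _ _ _ univ gh.
have gh' (b : R^o) : g ((b : R) *: n) = h ((b : R) *: l') by rewrite !BhomZ ?gh.
have [[w [_ w1 w2]] _] := univ _ _ _ (Bhom_orbit n) (Bhom_orbit l') gh'.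
by exists (w 1); rewrite w1 w2 !scale1r.
Qed.

Lemma pullback_ext x y : p1 x = p1 y -> p2 x = p2 y -> x = y.
Proof.
case: pb => hp1 hp2 pc univ e1 e2.
have gh (b : R^o) : g ((b : R) *: p1 x) = h ((b : R) *: p2 x) by rewrite !BhomZ ?pc.
have [_ uniq] := univ _ _ _ (Bhom_orbit (p1 x)) (Bhom_orbit (p2 x)) gh.
have := uniq _ _ (Bhom_orbit x) (Bhom_orbit y); rewrite /= => /(_ _ _ _ _ 1).
by rewrite !scale1r; apply=> b; rewrite BhomZ ?e1 ?e2.
Qed.

End Pullback.

Lemma pairD (V W : zmodType) (x y : V) (u v : W) : (x, u) + (y, v) = (x + y, u + v).
Proof. by []. Qed.

Lemma Bhom_pair (R : pzRingType) (X V W : lmodType R) (u : X -> V) (w : X -> W) :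
  Bhom u -> Bhom w -> Bhom (fun x => (u x, w x)).
Proof. by move=> hu hw a x y; rewrite hu hw. Qed.

Lemma pullback_exists (R : pzRingType) (N L L' : lmodType R) (g : N -> L)
    (h : L' -> L) :
  Bhom g -> Bhom h ->
  exists (P : lmodType R) (p1 : P -> N) (p2 : P -> L'), is_pullback g h p1 p2.
Proof.
move=> hg hh.
have hd : Bhom (fun x : N * L' => g x.1 - h x.2).
  by move=> a x y /=; rewrite hg hh scalerBr opprD addrACA.
exists (submod (kersub hd)), (fun x => (val x).1), (fun x => (val x).2).
split=> // [x|X u1 u2 hu1 hu2 uc].
  by apply/eqP; rewrite -subr_eq0; apply/eqP/(kersubP hd); exact: valP.
have uK x : (u1 x, u2 x) \in kersub hd by apply/(kersubP hd); rewrite /= uc subrr.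
split=> [|v1 v2 _ _ e11 e12 e21 e22 x].
  exists (fun x => insubd 0 (u1 x, u2 x)); split=> [|x|x].
  - exact: insubd_Bhom (Bhom_pair hu1 hu2) uK.
  - by rewrite insubdK.
  - by rewrite insubdK.
apply: val_inj.
rewrite [val (v1 x)]surjective_pairing [val (v2 x)]surjective_pairing.
by rewrite e11 e12 e21 e22.
Qed.

Section PushoutModel.
Variables (R : pzRingType) (M N M' : lmodType R) (f : M -> N) (h : M -> M').
Hypotheses (hf : Bhom f) (hh : Bhom h).

Definition pushout_rel (m : M) : N * M' := (f m, - h m).

Lemma pushout_rel_Bhom : Bhom pushout_rel.
Proof. by move=> a x y; rewrite /pushout_rel hf hh opprD -scalerN. Qed.

Local Notation PO := (quotmod (imsub pushout_rel_Bhom)).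
Definition pushout_inl (n : N) : PO := \pi_PO (n, 0).
Definition pushout_inr (m' : M') : PO := \pi_PO (0, m').

Lemma pushout_inlr n m' : pushout_inl n + pushout_inr m' = \pi_PO (n, m').
Proof. by rewrite -(BhomD (pi_Bhom _)) pairD addr0 add0r. Qed.

Lemma pushout_inl_Bhom : Bhom pushout_inl.
Proof.
exact: Bhom_comp (Bhom_pair (fun _ _ _ => erefl) (@Bhom_const0 _ N M')) (pi_Bhom _).
Qed.

Lemma pushout_inr_Bhom : Bhom pushout_inr.
Proof.
exact: Bhom_comp (Bhom_pair (@Bhom_const0 _ M' N) (fun _ _ _ => erefl)) (pi_Bhom _).
Qed.

Lemma pushout_inl_inr m : pushout_inl (f m) = pushout_inr (h m).
Proof.
apply/eqP; rewrite -subr_eq0 -(BhomN pushout_inr_Bhom) pushout_inlr.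
by apply/eqP/pi_eq0/imsubP; exists m.
Qed.

Lemma pushout_is_pushout : is_pushout f h pushout_inl pushout_inr.
Proof.
split=> [| | |X u1 u2 hu1 hu2 uc].
- exact: pushout_inl_Bhom.
- exact: pushout_inr_Bhom.
- exact: pushout_inl_inr.
pose w (x : N * M') := u1 x.1 + u2 x.2.
have hw : Bhom w by move=> a x y; rewrite /w hu1 hu2 scalerDr addrACA.
have wS x : x \in imsub pushout_rel_Bhom -> w x = 0.
  by move=> /imsubP[m ->]; rewrite /w /= (BhomN hu2) uc subrr.
split=> [|v1 v2 hv1 hv2 v11 v12 v21 v22 z].
  exists (qlift w); split; first exact: qlift_Bhom.
    by move=> n; rewrite qlift_pi //= /w (Bhom0 hu2) addr0.
  by move=> m'; rewrite qlift_pi //= /w (Bhom0 hu1) add0r.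
rewrite -[z]reprK [repr z]surjective_pairing -pushout_inlr.
by rewrite (BhomD hv1) (BhomD hv2) v11 v12 v21 v22.
Qed.

Lemma pushout_exists :
  exists (Q : lmodType R) (q1 : N -> Q) (q2 : M' -> Q), is_pushout f h q1 q2.
Proof. by do 3 eexists; exact: pushout_is_pushout. Qed.

End PushoutModel.

Section Pushout.
Variables (R : pzRingType) (M N M' Q : lmodType R) (f : M -> N) (h : M -> M').
Variables (q1 : N -> Q) (q2 : M' -> Q).
Hypotheses (hf : Bhom f) (hh : Bhom h) (po : is_pushout f h q1 q2).

Lemma pushout_sum_ker n m' : q1 n + q2 m' = 0 -> exists m, n = f m /\ m' = - h m.
Proof.
case: po => _ _ _ univ e.
have [[psi [hpsi psi1 psi2]] _] := univ _ _ _ (pushout_inl_Bhom hf hh)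
  (pushout_inr_Bhom hf hh) (pushout_inl_inr hf hh).
have : psi (q1 n + q2 m') = 0 by rewrite e (Bhom0 hpsi).
rewrite (BhomD hpsi) psi1 psi2 pushout_inlr => /pi_eq0/imsubP[m [-> ->]].
by exists m.
Qed.

Lemma pushout_sum_surj x : exists n m', x = q1 n + q2 m'.
Proof.
case: po => hq1 hq2 qc univ.
have [[psi [hpsi psi1 psi2]] _] := univ _ _ _ (pushout_inl_Bhom hf hh)
  (pushout_inr_Bhom hf hh) (pushout_inl_inr hf hh).
have [_ _ _ /(_ _ _ _ hq1 hq2 qc) [[phi [hphi phi1 phi2]] _]] :=
  pushout_is_pushout hf hh.
have phipsi : phi (psi x) = x.
  have [_ uniq] := univ _ _ _ hq1 hq2 qc.
  apply: (uniq (phi \o psi) id) => // [|n|m'] /=; first exact: Bhom_comp.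
    by rewrite psi1 phi1.
  by rewrite psi2 phi2.
exists (repr (psi x)).1, (repr (psi x)).2.
rewrite -{1}phipsi -phi1 -phi2 -(BhomD hphi); congr phi.
by rewrite pushout_inlr -surjective_pairing reprK.
Qed.

End Pushout.

Section TensorFunctor.
Variables (k : fieldType) (H : falgType k) (B : algType k) (DB : B -> tens H B).
Hypothesis DB1 : DB 1 = tone H B.

Local Notation T := (@tmap k H _ _).
Local Notation tact := (@tact k H B DB _).
Local Notation hb := (@hb k H).
Local Notation hc := (@hc k H).

Lemma tactD (M : lmodType B) a (t s : tens H M) : tact a (t + s) = tact a t + tact a s.
Proof.
apply/ffunP => l; rewrite !ffunE -big_split; apply: eq_bigr => i _.
by rewrite -big_split; apply: eq_bigr => j _; rewrite !ffunE !scalerDr.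
Qed.

Lemma tactB (M : lmodType B) a (t s : tens H M) : tact a (t - s) = tact a t - tact a s.
Proof.
apply/ffunP => l; rewrite !ffunE -sumrB; apply: eq_bigr => i _.
by rewrite -sumrB; apply: eq_bigr => j _; rewrite !ffunE !scalerBr.
Qed.

Lemma hbE i : hb i = (vbasis (fullv : {vspace H}))`_i.
Proof. exact: tnth_nth. Qed.

Lemma hc_hb l j : hc l (hb j) = (j == l)%:R.
Proof. by rewrite /hc hbE coord_free //; apply: basis_free (vbasisP _). Qed.

Lemma sum_hc (h : H) : \sum_i hc i h *: hb i = h.
Proof.
by rewrite [RHS](coord_vbasis (memvf h)); apply: eq_bigr => i _; rewrite hbE.
Qed.

Lemma hc_mul1 l j : \sum_i hc l (hb i * hb j) * hc i 1 = (j == l)%:R.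
Proof.
rewrite -hc_hb -[hb j in RHS]mul1r -[1 in RHS]sum_hc mulr_suml /hc linear_sum.
by apply: eq_bigr => i _; rewrite -scalerAl linearZ /= mulrC.
Qed.

Lemma tact1 (M : lmodType B) (t : tens H M) : tact 1 t = t.
Proof.
apply/ffunP => l; rewrite ffunE exchange_big /=.
transitivity (\sum_j ((((j == l)%:R : k)%:A : B) *: t j)).
  apply: eq_bigr => j _; rewrite -hc_mul1.
  under eq_bigr do rewrite DB1 ffunE scalerA -scalerAl mul1r scalerA.
  by rewrite !scaler_suml.
rewrite (bigD1 l) //= eqxx !scale1r big1 ?addr0 // => j /negbTE ->.
by rewrite !scale0r.
Qed.

Section TBLinear.
Variables (M N : lmodType B) (r : tens H M -> tens H N) (hr : tBlin DB r).

Lemma tBlinD t s : r (t + s) = r t + r s.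
Proof. by have := hr 1 t s; rewrite !tact1. Qed.

Lemma tBlin0 : r 0 = 0.
Proof. by apply: (addrI (r 0)); rewrite -tBlinD !addr0. Qed.

Lemma tBlinB t s : r (t - s) = r t - r s.
Proof. by apply: (addIr (r s)); rewrite -tBlinD !subrK. Qed.

End TBLinear.

Lemma tBlin_id (M : lmodType B) : tBlin DB (@id (tens H M)).
Proof. by []. Qed.

Lemma tBlin_comp (M N P : lmodType B) (r : tens H M -> tens H N)
    (s : tens H N -> tens H P) :
  tBlin DB r -> tBlin DB s -> tBlin DB (s \o r).
Proof. by move=> hr hs a t u /=; rewrite hr hs. Qed.

Lemma tBlin_sub (M N : lmodType B) (r s : tens H M -> tens H N) :
  tBlin DB r -> tBlin DB s -> tBlin DB (fun t => r t - s t).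
Proof. by move=> hr hs a t u; rewrite hr hs tactB opprD addrACA. Qed.

Lemma tBlin_tmap (M N : lmodType B) (f : M -> N) : Bhom f -> tBlin DB (T f).
Proof.
move=> hf a t s; apply/ffunP => l; rewrite !ffunE (BhomD hf) (Bhom_sum hf).
congr (_ + _); apply: eq_bigr => i _; rewrite (Bhom_sum hf); apply: eq_bigr => j _.
by rewrite !(BhomZ hf) ffunE.
Qed.

Lemma tmap_comp (M N P : Type) (f : M -> N) (g : N -> P) (t : tens H M) :
  T (g \o f) t = T g (T f t).
Proof. by apply/ffunP => i; rewrite !ffunE. Qed.

Lemma tmap_inj (M N : Type) (f : M -> N) : injective f -> injective (T f).
Proof.
move=> f_inj t s /ffunP e; apply/ffunP => i; apply: f_inj.
by have := e i; rewrite !ffunE.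
Qed.

Lemma tmap_surj (M N : Type) (f : M -> N) :
  (forall z, exists y, f y = z) -> forall z : tens H N, exists y, T f y = z.
Proof.
move=> /choice[c fc] z; exists (T c z).
by apply/ffunP => i; rewrite !ffunE fc.
Qed.

Lemma tmap_exact (M N L : lmodType B) (f : M -> N) (g : N -> L) :
  Bhom g -> (forall y, g y = 0 <-> exists x, y = f x) ->
  forall y : tens H N, T g y = 0 <-> exists x, y = T f x.
Proof.
move=> hg fg_exact y; split=> [/ffunP gy0|[x ->]]; last first.
  by apply/ffunP => i; rewrite !ffunE; apply/fg_exact; exists (x i).
have [x fx] : {x : 'I_(hn H) -> M & forall i, y i = f (x i)}.
  apply: (choice (P := fun i m => y i = f m)) => i.
  by apply/fg_exact; have := gy0 i; rewrite !ffunE.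
by exists [ffun i => x i]; apply/ffunP => i; rewrite !ffunE fx.
Qed.

Lemma E_H_intro (M N L : lmodType B) (f : M -> N) (g : N -> L) :
  Bhom f -> Bhom g -> injective f -> (forall z, exists y, g y = z) ->
  (forall y, g y = 0 <-> exists x, y = f x) ->
  (exists r : tens H N -> tens H M, tBlin DB r /\ forall t, r (T f t) = t) ->
  E_H DB f g.
Proof.
move=> hf hg f_inj g_surj fg_exact retr; split=> //; split=> //.
- exact: tBlin_tmap.
- exact: tBlin_tmap.
- exact: tmap_inj.
- by split; [exact: tmap_surj | exact: tmap_exact].
Qed.

Lemma split_exact_section (M N L : lmodType B) (F : tens H M -> tens H N)
    (G : tens H N -> tens H L) :
  split_exact_tens DB F G -> exists s, tBlin DB s /\ forall z, G (s z) = z.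
Proof.
move=> [hF hG _ [G_surj FG_exact] [r [hr rF]]].
have [c Gc] := choice G_surj.
have GF x : G (F x) = 0 by apply/FG_exact; exists x.
pose s z := c z - F (r (c z)).
have sG y : s (G y) = y - F (r y).
  have /FG_exact[x ex] : G (c (G y) - y) = 0 by rewrite (tBlinB hG) Gc subrr.
  rewrite /s (_ : c (G y) = y + F x); last by rewrite -ex addrC subrK.
  by rewrite (tBlinD hr) rF (tBlinD hF) opprD addrACA subrr addr0.
exists s; split=> [a z z'|z]; last by rewrite /s (tBlinB hG) GF subr0 Gc.
have [y <-] := G_surj z; have [y' <-] := G_surj z'.
by rewrite -hG !sG hr hF tactB opprD addrACA.
Qed.

Lemma kernel_retraction (N P : lmodType B) (g : N -> P) (hg : Bhom g)
    (s : tens H P -> tens H N) :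
  tBlin DB s -> (forall z, T g (s z) = z) ->
  exists rho : tens H N -> tens H (submod (kersub hg)),
    tBlin DB rho /\ forall t, rho (T val t) = t.
Proof.
move=> hs gs.
pose p t := t - s (T g t).
have hp : tBlin DB p := tBlin_sub (@tBlin_id _) (tBlin_comp (tBlin_tmap hg) hs).
have p_ker t i : p t i \in kersub hg.
  apply/kersubP; have /ffunP/(_ i) : T g (p t) = 0.
    by rewrite (tBlinB (tBlin_tmap hg)) gs subrr.
  by rewrite !ffunE.
pose rho t := T (insubd (0 : submod (kersub hg))) (p t).
have val_rho t : T val (rho t) = p t.
  by apply/ffunP => i; rewrite ffunE /rho ffunE insubdK //; exact: p_ker.
have g_val (u : tens H (submod (kersub hg))) : T g (T val u) = 0.
  by apply/ffunP => i; rewrite !ffunE; apply/kersubP; exact: valP.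
exists rho; split=> [a t u|t]; apply: (tmap_inj val_inj).
  by rewrite (tBlin_tmap (@val_Bhom _ _ _)) !val_rho hp.
by rewrite val_rho /p g_val (tBlin0 hs) subr0.
Qed.

Local Notation E := (@E_H k H B DB).

Lemma E_H_zero (Z : lmodType B) : (forall z : Z, z = 0) -> deflation E (@id Z).
Proof.
move=> Z0; exists Z, id; apply: E_H_intro => //.
- by move=> z; exists z.
- by move=> y; split=> [_|_]; [exists y | exact: Z0].
- by exists id; split=> // t; apply/ffunP => i; rewrite ffunE.
Qed.

Lemma E_H_inflation_comp (M N P : lmodType B) (f1 : M -> N) (f2 : N -> P) :
  inflation E f1 -> inflation E f2 -> inflation E (f2 \o f1).
Proof.
move=> [L1 [g1 [hf1 _ f1_inj _ [_ _ _ _ [r1 [hr1 r1f]]]]]].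
move=> [L2 [g2 [hf2 _ f2_inj _ [_ _ _ _ [r2 [hr2 r2f]]]]]].
have hf := Bhom_comp hf1 hf2.
exists (quotmod (imsub hf)), \pi_(quotmod (imsub hf)); apply: E_H_intro => //.
- exact: pi_Bhom.
- by move=> x y /f2_inj/f1_inj.
- exact: pi_surj.
- exact: pi_imsub_eq0.
- exists (r1 \o r2); split; first exact: tBlin_comp.
  by move=> t /=; rewrite tmap_comp r2f r1f.
Qed.

Lemma E_H_deflation_comp (N L P : lmodType B) (g1 : N -> L) (g2 : L -> P) :
  deflation E g1 -> deflation E g2 -> deflation E (g2 \o g1).
Proof.
move=> [M1 [f1 [_ hg1 _ [g1_surj _] sp1]]] [M2 [f2 [_ hg2 _ [g2_surj _] sp2]]].
have [s1 [hs1 g1s1]] := split_exact_section sp1.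
have [s2 [hs2 g2s2]] := split_exact_section sp2.
have hg := Bhom_comp hg1 hg2.
have [rho retr] : exists rho : tens H N -> tens H (submod (kersub hg)),
    tBlin DB rho /\ forall t, rho (T val t) = t.
  apply: kernel_retraction (tBlin_comp hs2 hs1) _ => z.
  by rewrite tmap_comp /= g1s1 g2s2.
exists (submod (kersub hg)), val; apply: E_H_intro => //.
- exact: val_inj.
- by move=> z; have [y <-] := g2_surj z; have [x <-] := g1_surj y; exists x.
- move=> y; split=> [y0|[x ->]]; last by apply/(kersubP hg); exact: valP.
  by exists (insubd 0 y); rewrite insubdK //; apply/(kersubP hg).
- by exists rho.
Qed.

Lemma E_H_pullback_deflation (N L L' : lmodType B) (g : N -> L) (h : L' -> L) :
  deflation E g -> Bhom h ->
  forall (P : lmodType B) (p1 : P -> N) (p2 : P -> L'),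
    is_pullback g h p1 p2 -> deflation E p2.
Proof.
move=> [M [f [hf hg f_inj [g_surj fg_exact] [_ _ _ _ [r [hr rf]]]]]] hh P p1 p2 pb.
have [hp1 hp2 pc univ] := pb.
have gf m : g (f m) = h 0 by rewrite (Bhom0 hh); apply/fg_exact; exists m.
have [[v [hv v1 v2]] _] := univ _ _ _ hf (@Bhom_const0 _ M L') gf.
exists M, v; apply: E_H_intro => //.
- by move=> x y e; apply: f_inj; rewrite -!v1 e.
- move=> l'; have [n gn] := g_surj (h l').
  by have [x [_ <-]] := pullback_point hg hh pb gn; exists x.
- move=> x; split=> [x0|[m ->]]; last exact: v2.
  have /fg_exact[m em] : g (p1 x) = 0 by rewrite pc x0 (Bhom0 hh).
  by exists m; apply: (pullback_ext hg hh pb); rewrite ?v1 ?v2.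
- exists (r \o T p1); split; first exact: tBlin_comp (tBlin_tmap hp1) hr.
  move=> t /=; rewrite -tmap_comp (_ : T (p1 \o v) t = T f t) ?rf //.
  by apply/ffunP => i; rewrite !ffunE /= v1.
Qed.

Section PushoutRetraction.
Variables (M N M' Q : lmodType B) (f : M -> N) (h : M -> M').
Variables (q1 : N -> Q) (q2 : M' -> Q) (r : tens H N -> tens H M).
Hypotheses (hf : Bhom f) (hh : Bhom h) (po : is_pushout f h q1 q2).
Hypotheses (hr : tBlin DB r) (rf : forall t, r (T f t) = t).

Lemma tmap_pushout_sum_surj t : exists ab, T q1 ab.1 + T q2 ab.2 = t.
Proof.
have [d dP] : {d : 'I_(hn H) -> N * M' & forall i, t i = q1 (d i).1 + q2 (d i).2}.
  apply: (choice (P := fun i nm => t i = q1 nm.1 + q2 nm.2)) => i.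
  by have [n [m' ->]] := pushout_sum_surj hf hh po (t i); exists (n, m').
exists ([ffun i => (d i).1], [ffun i => (d i).2]).
by apply/ffunP => i; rewrite !ffunE dP.
Qed.

Lemma tmap_pushout_sum_ker a b : T q1 a + T q2 b = 0 -> T h (r a) + b = 0.
Proof.
move=> /ffunP e.
have [m fm] : {m : 'I_(hn H) -> M & forall i, a i = f (m i) /\ b i = - h (m i)}.
  apply: (choice (P := fun i x => a i = f x /\ b i = - h x)) => i.
  by apply: (pushout_sum_ker hf hh po); have := e i; rewrite !ffunE.
have -> : a = T f [ffun i => m i] by apply/ffunP => i; rewrite !ffunE (fm i).1.
have -> : b = - T h [ffun i => m i] by apply/ffunP => i; rewrite !ffunE (fm i).2.
by rewrite rf subrr.
Qed.

Lemma pushout_retraction : exists r', tBlin DB r' /\ forall t, r' (T q2 t) = t.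
Proof.
have [hq1 hq2 _ _] := po.
have [d dP] := choice tmap_pushout_sum_surj.
pose r' t := T h (r (d t).1) + (d t).2.
have r'E a b t : T q1 a + T q2 b = t -> r' t = T h (r a) + b.
  move=> e; apply/eqP; rewrite -subr_eq0 opprD addrACA.
  rewrite -(tBlinB (tBlin_tmap hh)) -(tBlinB hr); apply/eqP/tmap_pushout_sum_ker.
  by rewrite !(tBlinB (tBlin_tmap _)) // addrACA -opprD dP e subrr.
exists r'; split=> [c t s|t].
  rewrite (r'E (tact c (d t).1 + (d s).1) (tact c (d t).2 + (d s).2)).
    by rewrite hr (tBlin_tmap hh) tactD addrACA.
  by rewrite !(tBlin_tmap _) // addrACA -tactD !dP.
rewrite (r'E 0 t) ?(tBlin0 (tBlin_tmap hq1)) ?add0r //.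
by rewrite (tBlin0 hr) (tBlin0 (tBlin_tmap hh)) add0r.
Qed.

End PushoutRetraction.

Lemma E_H_pushout_inflation (M N M' : lmodType B) (f : M -> N) (h : M -> M') :
  inflation E f -> Bhom h ->
  forall (Q : lmodType B) (q1 : N -> Q) (q2 : M' -> Q),
    is_pushout f h q1 q2 -> inflation E q2.
Proof.
move=> [L [g [hf hg f_inj [g_surj fg_exact] [_ _ _ _ [r [hr rf]]]]]] hh Q q1 q2 po.
have [hq1 hq2 qc univ] := po.
have gf m : g (f m) = (fun _ => 0 : L) (h m) by apply/fg_exact; exists m.
have [[g' [hg' g'1 g'2]] _] := univ _ _ _ hg (@Bhom_const0 _ M' L) gf.
exists L, g'; apply: E_H_intro => //.
- move=> x y e; have /(pushout_sum_ker hf hh po)[m [m0 xy]] : q1 0 + q2 (x - y) = 0.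
    by rewrite (Bhom0 hq1) add0r (BhomB hq2) e subrr.
  have m_eq0 : m = 0 by apply: f_inj; rewrite -m0 (Bhom0 hf).
  by apply/eqP; rewrite -subr_eq0 xy m_eq0 (Bhom0 hh) oppr0.
- by move=> l; have [n <-] := g_surj l; exists (q1 n).
- move=> x; split=> [|[m' ->]]; last exact: g'2.
  have [n [m' ->]] := pushout_sum_surj hf hh po x.
  rewrite (BhomD hg') g'1 g'2 addr0 => /fg_exact[m ->].
  by exists (h m + m'); rewrite qc (BhomD hq2).
- exact: pushout_retraction hf hh po hr rf.
Qed.

End TensorFunctor.

Theorem lemma3p1 (k : fieldType) (H : falgType k)
  (Delta : H -> tens H H) (eps : H -> k) (S : H -> H)
  (B : algType k) (DeltaB : B -> tens H B) :
  is_hopf Delta eps S ->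
  is_comod_alg Delta eps DeltaB ->
  exact_structure (@E_H k H B DeltaB).
Proof.
move=> _ [_ DB1 _ _ _]; split.
- move=> M N L f g [hf hg f_inj [g_surj fg_exact] _].
  by split; [| | exact: exact_is_kernel | exact: exact_is_cokernel].
- exact: E_H_zero.
- by split; [exact: E_H_deflation_comp | exact: E_H_inflation_comp].
- move=> N L L' g h defl hh; split; last exact: E_H_pullback_deflation defl hh.
  by have [M [f [_ hg _ _ _]]] := defl; exact: pullback_exists.
- move=> M N M' f h infl hh; split; last exact: E_H_pushout_inflation infl hh.
  by have [L [g [hf _ _ _ _]]] := infl; exact: pushout_exists.
Qed.
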